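(* Let $J\subseteq\Delta^r_n$ be an M-convex set and let $\rho\colon\Delta^r_n\to\mathbb R_{\ge0}$ be a function whose support $\{\alpha:\rho(\alpha)\ne0\}$ equals $J$. Define $f\colon\mathbb Z^n\to\mathbb R\cup\{\infty\}$ by $f(\alpha)=-\log\rho(\alpha)$ for $\alpha\in\Delta^r_n$ (with $-\log 0=\infty$) and $f(\alpha)=\infty$ for $\alpha\notin\Delta^r_n$. Then $\rho$ is a $\mathbb T_0$-representation of $J$ if and only if $f$ is an M-convex function.
   Context: $\Delta^r_n=\{\alpha\in\mathbb N^n:\sum_i\alpha_i=r\}$, $\epsilon_i$ the standard basis vectors, $\le$ componentwise. A nonempty $J\subseteq\Delta^r_n$ is M-convex if for all $\alpha,\beta\in J$ and $i$ with $\alpha_i<\beta_i$ there is $j$ with $\alpha_j>\beta_j$ and $\alpha+\epsilon_i-\epsilon_j,\ \beta-\epsilon_i+\epsilon_j\in J$. $\delta^-_J,\delta^+_J$ denote the componentwise minimum and maximum of the elements of $J$. The tropical hyperfield $\mathbb T_0$ is $\mathbb R_{\ge0}$ with its multiplication, in which $-1=1$, and where a formal sum of elements is null iff either all terms are $0$ or the maximum of the terms is attained by at least two terms. A $\mathbb T_0$-representation of $J$ is a function $\rho\colon\Delta^r_n\to\mathbb R_{\ge0}$ with support $J$ such that for all $2\le s\le r$, all $\alpha\in\Delta^{r-s}_n$ with $\delta^-_J\le\alpha$, and all $i_0,\dots,i_s,j_2,\dots,j_s\in[n]$ with $\alpha+\epsilon_{i_0}+\dots+\epsilon_{i_s}+\epsilon_{j_2}+\dots+\epsilon_{j_s}\le\delta^+_J$,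 the formal sum $\sum_{k=0}^s\rho(\alpha-\epsilon_{i_k}+\epsilon_{i_0}+\dots+\epsilon_{i_s})\cdot\rho(\alpha+\epsilon_{i_k}+\epsilon_{j_2}+\dots+\epsilon_{j_s})$ is null in $\mathbb T_0$. A function $f\colon\mathbb Z^n\to\mathbb R\cup\{\infty\}$ is M-convex (in Murota's sense) if its support $\{\alpha:f(\alpha)\ne\infty\}$ is nonempty and for all $\alpha,\beta$ in the support and every $k$ with $\alpha_k>\beta_k$ there is $l$ with $\alpha_l<\beta_l$ and $f(\alpha)+f(\beta)\ge f(\alpha-\epsilon_k+\epsilon_l)+f(\beta+\epsilon_k-\epsilon_l)$. *)

From HB Require Import structures.
From mathcomp Require Import all_boot all_order all_algebra.
From mathcomp Require Import all_classical all_reals all_analysis.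
Set Implicit Arguments. Unset Strict Implicit. Unset Printing Implicit Defensive.
Import Order.TTheory GRing.Theory Num.Theory.
Local Open Scope classical_set_scope.
Local Open Scope ring_scope.

Notation vec n := {ffun 'I_n -> int}.

Definition eps (n : nat) (i : 'I_n) : vec n := [ffun j => (i == j)%:R].

Definition vle (n : nat) (a b : vec n) : Prop := forall i, a i <= b i.

Definition in_Delta (n r : nat) (a : vec n) : bool :=
  [forall i, 0 <= a i] && (\sum_i a i == r%:Z).

Definition Mconvex_set (n : nat) (J : set (vec n)) : Prop :=
  J !=set0 /\
  forall a b, J a -> J b -> forall i, a i < b i ->
    exists j, [/\ a j > b j, J (a + eps i - eps j) & J (b - eps i + eps j)].

(* the minimum of a set of integers (default 0 if it has none) *)
Definition int_min (S : set int) : int :=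
  xget 0 [set m | S m /\ forall x, S x -> m <= x].
Definition int_max (S : set int) : int :=
  xget 0 [set m | S m /\ forall x, S x -> x <= m].

Definition delta_minus (n : nat) (J : set (vec n)) : vec n :=
  [ffun i => int_min [set b i | b in J]].
Definition delta_plus (n : nat) (J : set (vec n)) : vec n :=
  [ffun i => int_max [set b i | b in J]].

(* A formal sum of the terms t 0, ..., t (m-1) of T_0 is null *)
Definition T0_null (R : realType) (m : nat) (t : 'I_m -> R) : Prop :=
  (forall k, t k = 0) \/
  exists k1 k2, [/\ k1 != k2, t k1 = t k2 &
                   forall k, t k <= t k1].

Definition T0_representation (R : realType) (n r : nat) (J : set (vec n))
    (rho : vec n -> R) : Prop :=
  (forall a, in_Delta r a -> 0 <= rho a) /\
  (forall a, in_Delta r a -> (rho a != 0 <-> J a)) /\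
  forall (s : nat), (2 <= s <= r)%N ->
  forall (a : vec n), in_Delta (r - s) a -> vle (delta_minus J) a ->
  forall (i : 'I_s.+1 -> 'I_n) (j : 'I_s.-1 -> 'I_n),
    vle (a + \sum_k eps (i k) + \sum_l eps (j l)) (delta_plus J) ->
    T0_null (fun k : 'I_s.+1 =>
      rho (a - eps (i k) + \sum_k' eps (i k')) *
      rho (a + eps (i k) + \sum_l eps (j l))).

Definition f_of (R : realType) (n r : nat) (rho : vec n -> R) (a : vec n)
    : \bar R :=
  if in_Delta r a then (if rho a == 0 then +oo%E else (- ln (rho a))%:E)
  else +oo%E.

Definition Mconvex_fun (R : realType) (n : nat) (f : vec n -> \bar R) : Prop :=
  (exists a, f a != +oo%E) /\
  forall a b, f a != +oo%E -> f b != +oo%E -> forall k, a k > b k ->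
    exists l, a l < b l /\
      (f (a - eps k + eps l)%R + f (b + eps k - eps l)%R <= f a + f b)%E.

From HB Require Import structures.
From mathcomp Require Import all_boot all_order all_algebra.
From mathcomp Require Import all_classical all_reals all_analysis.
From mathcomp Require Import zify.

(* Taking logarithms, M-convexity of f is the exchange property
   rho a * rho b <= rho (a - e_k + e_l) * rho (b + e_k - e_l) on the support of rho.
   Write the terms of a T0-relation as rho (a + I - e_i) * rho (a + I' + e_i), i ranging
   over the multiset I = {i_0, ..., i_s}, with I' = {j_2, ..., j_s}.  An index repeated in
   I gives two equal terms; if the maximal term has an index i occurring once in I, the
   exchange at k = i yields another index l of I whose term is at least as large, so the
   maximum is attained twice.  Conversely, for a, b in J with a_k > b_k let m = min(a, b).
   If |b - m| = 1 the exchange is an equality.  Otherwise, in the T0-relation at m with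
   I = b + e_k - m and I' = a - e_k - m, the index k occurs once in I and carries the
   positive term rho b * rho a; the maximum is therefore attained at some l <> k, which is
   the exchange partner. *)

Set Implicit Arguments.
Unset Strict Implicit.
Unset Printing Implicit Defensive.
Import Order.TTheory GRing.Theory Num.Theory.
Local Open Scope classical_set_scope.
Local Open Scope ring_scope.

Section IntegerVectors.
Variable n : nat.
Implicit Types (u v : vec n) (p c : 'I_n).

Definition vsum v : int := \sum_c v c.

Lemma vsumD u v : vsum (u + v) = vsum u + vsum v.
Proof. by rewrite /vsum -big_split; apply: eq_bigr => c _; rewrite ffunE. Qed.

Lemma vsumB u v : vsum (u - v) = vsum u - vsum v.
Proof. by rewrite /vsum -sumrB; apply: eq_bigr => c _; rewrite !ffunE. Qed.

Lemma vsum_sum m (F : 'I_m -> vec n) : vsum (\sum_x F x) = \sum_x vsum (F x).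
Proof. by rewrite /vsum; under eq_bigr do rewrite sum_ffunE; exact: exchange_big. Qed.

Lemma epsE p c : eps p c = (p == c)%:R.
Proof. by rewrite ffunE. Qed.

Lemma vsum_eps p : vsum (eps p) = 1.
Proof.
rewrite /vsum (bigD1 p) //= big1 => [|c cp]; first by rewrite epsE eqxx addr0.
by rewrite epsE eq_sym (negbTE cp).
Qed.

Lemma vsum_sum_eps m (i : 'I_m -> 'I_n) : vsum (\sum_x eps (i x)) = m%:Z.
Proof.
rewrite vsum_sum (eq_bigr _ (fun x _ => vsum_eps (i x))).
by rewrite sumr_const card_ord natz.
Qed.

Lemma vsum_ge_coord v c : (forall d, 0 <= v d) -> v c <= vsum v.
Proof. by move=> v0; rewrite /vsum (bigD1 c) //= lerDl sumr_ge0. Qed.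

Lemma sum_epsE m (i : 'I_m -> 'I_n) c :
  (\sum_x eps (i x)) c = \sum_x ((i x == c)%:R : int).
Proof. by rewrite sum_ffunE; apply: eq_bigr => x _; rewrite epsE. Qed.

Lemma sum_eps_ge0 m (i : 'I_m -> 'I_n) c : 0 <= (\sum_x eps (i x)) c.
Proof. by rewrite sum_epsE sumr_ge0. Qed.

Lemma sum_eps_ge1 m (i : 'I_m -> 'I_n) x : 1 <= (\sum_y eps (i y)) (i x).
Proof. by rewrite sum_epsE (bigD1 x) //= eqxx lerDl sumr_ge0. Qed.

Lemma sum_eps_gt0 m (i : 'I_m -> 'I_n) c :
  0 < (\sum_x eps (i x)) c -> exists x, i x = c.
Proof.
rewrite sum_epsE => /gt_eqF/negbT; apply: contraNP => /forallNP ic.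
by rewrite big1 // => x _; case: eqP => // /ic.
Qed.

Lemma sum_eps_eq1 m (i : 'I_m -> 'I_n) x :
  (forall y, y != x -> i y != i x) -> (\sum_y eps (i y)) (i x) = 1.
Proof.
move=> inj_x; rewrite sum_epsE (bigD1 x) //= eqxx big1 ?addr0 // => y yx.
by rewrite (negbTE (inj_x y yx)).
Qed.

Lemma sum_eps_ge2 m (i : 'I_m -> 'I_n) x y :
  x != y -> i x = i y -> 2 <= (\sum_z eps (i z)) (i x).
Proof.
move=> xy ixy; rewrite sum_epsE (bigD1 x) //= (bigD1 y) 1?eq_sym //= ixy eqxx.
by rewrite addrA lerDl sumr_ge0.
Qed.

Lemma sum_eps_of_ge0 m v : (forall c, 0 <= v c) -> vsum v = m%:Z ->
  exists i : 'I_m -> 'I_n, \sum_x eps (i x) = v.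
Proof.
elim: m v => [|m IH] v v0 vsum_v.
  have i : 'I_0 -> 'I_n by case.
  exists i.
  rewrite big_ord0; apply/ffunP => c; rewrite ffunE; apply/esym.
  exact: (psumr_eq0P (P := xpredT) (fun c _ => v0 c) vsum_v).
have [c vc] : exists c, 0 < v c.
  apply/not_existsP => v_le0; move: vsum_v; rewrite /vsum big1 // => c _.
  by apply/eqP; rewrite eq_le v0 andbT leNgt; apply/negP => /v_le0.
have [i sum_i] : exists i : 'I_m -> 'I_n, \sum_x eps (i x) = v - eps c.
  apply: IH; last by rewrite vsumB vsum_eps vsum_v; lia.
  by move=> d; rewrite !ffunE; case: eqP => [<-|_]; rewrite /= ?subr0 ?subr_ge0.
exists (fun x => if unlift ord0 x is Some y then i y else c).
rewrite big_ord_recl unlift_none.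
by under eq_bigr do rewrite liftK; rewrite sum_i addrC subrK.
Qed.

Lemma vsum_eq1_eps u : (forall c, 0 <= u c) -> vsum u = 1 ->
  exists l, u = eps l.
Proof.
by move=> u_ge0 /(@sum_eps_of_ge0 1 u u_ge0)[i <-]; rewrite big_ord1; exists (i ord0).
Qed.

Lemma in_DeltaP r v : in_Delta r v <-> (forall c, 0 <= v c) /\ vsum v = r%:Z.
Proof.
by split=> [/andP[/forallP v0 /eqP sv]|[v0 sv]] //; apply/andP; split; [apply/forallP|apply/eqP].
Qed.

Lemma in_Delta_exchange r v k l : in_Delta r v -> 0 < v k ->
  in_Delta r (v - eps k + eps l).
Proof.
move=> /in_DeltaP[v0 sv] vk; apply/in_DeltaP; split; last first.
  by rewrite vsumD vsumB !vsum_eps sv subrK.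
move=> c; rewrite !ffunE addr_ge0 //; case: eqP => [<-|_] /=; rewrite ?subr0 //.
by rewrite subr_ge0.
Qed.

Definition vmin u v : vec n := [ffun c => Order.min (u c) (v c)].

Lemma T0_terms_in_Delta r s a (i : 'I_s.+1 -> 'I_n) (j : 'I_s.-1 -> 'I_n) x p :
  (0 < s <= r)%N -> in_Delta (r - s) a ->
  in_Delta r (a - eps (i x) + \sum_k eps (i k)) /\
  in_Delta r (a + eps p + \sum_l eps (j l)).
Proof.
move=> /andP[s0 sr] /in_DeltaP[a_ge0 sa]; split; apply/in_DeltaP; split.
- move=> c; rewrite !ffunE; have := sum_eps_ge0 i c; have := sum_eps_ge1 i x.
  by have := a_ge0 c; case: eqP => [<-|_] /=; lia.
- by rewrite vsumD vsumB vsum_eps vsum_sum_eps sa; lia.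
- by move=> c; rewrite !ffunE !addr_ge0 ?sum_eps_ge0.
- by rewrite !vsumD vsum_eps vsum_sum_eps sa; lia.
Qed.

End IntegerVectors.

Lemma int_min_le (S : set int) x : S x -> (forall y, S y -> 0 <= y) ->
  int_min S <= x.
Proof.
move=> Sx S_ge0.
have [m [Sm m_min]] : exists m, S m /\ forall y, S y -> m <= y.
  have exS : exists k : nat, `[< S k%:Z >].
    by exists `|x|%N; apply/asboolP; rewrite gez0_abs ?S_ge0.
  case: (ex_minnP exS) => k /asboolP Sk k_min; exists k%:Z; split => // y Sy.
  rewrite -(gez0_abs (S_ge0 y Sy)) lez_nat; apply: k_min.
  by apply/asboolP; rewrite gez0_abs ?S_ge0.
by have [_ ->] := xgetPex 0 (ex_intro (fun m => S m /\ _) m (conj Sm m_min)).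
Qed.

Lemma int_max_ge (S : set int) (B : nat) x : S x ->
  (forall y, S y -> 0 <= y <= B%:Z) -> x <= int_max S.
Proof.
move=> Sx S_bnd.
have [m [Sm m_max]] : exists m, S m /\ forall y, S y -> y <= m.
  have exS : exists k : nat, `[< S k%:Z >].
    by exists `|x|%N; apply/asboolP; rewrite gez0_abs ?(andP (S_bnd x Sx)).1.
  have leB k : `[< S k%:Z >] -> (k <= B)%N.
    by move=> /asboolP/S_bnd/andP[_]; rewrite lez_nat.
  case: (ex_maxnP exS leB) => k /asboolP Sk k_max; exists k%:Z; split => // y Sy.
  have /andP[y0 _] := S_bnd y Sy.
  rewrite -(gez0_abs y0) lez_nat; apply: k_max.
  by apply/asboolP; rewrite gez0_abs.
by have [_ ->] := xgetPex 0 (ex_intro (fun m => S m /\ _) m (conj Sm m_max)).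
Qed.

Section DeltaBounds.
Variables (n r : nat) (J : set (vec n)).
Hypothesis J_Delta : forall a, J a -> in_Delta r a.

Lemma delta_minus_le a c : J a -> delta_minus J c <= a c.
Proof.
move=> Ja; rewrite ffunE; apply: int_min_le; first by exists a.
by move=> _ [b /J_Delta/in_DeltaP[b0 _] <-].
Qed.

Lemma delta_plus_ge a c : J a -> a c <= delta_plus J c.
Proof.
move=> Ja; rewrite ffunE; apply: (@int_max_ge _ r); first by exists a.
move=> _ [b /J_Delta/in_DeltaP[b0 sb] <-].
by rewrite b0 -sb vsum_ge_coord.
Qed.

End DeltaBounds.

Section TropicalNullity.
Variable R : realType.

Lemma T0_null_max_twice m (t : 'I_m.+1 -> R) : (forall k, 0 <= t k) ->
  (forall x, 0 < t x -> (forall y, t y <= t x) -> exists2 x', x' != x & t x' = t x) ->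
  T0_null t.
Proof.
move=> t0 max_twice.
have [|/existsNP[y /eqP ty]] := pselect (forall k, t k = 0); first by left.
right; have [x _ x_max] := @arg_maxP _ R _ ord0 xpredT t isT.
have tx : 0 < t x by rewrite (lt_le_trans _ (x_max y isT)) // lt0r ty t0.
have [x' x'x tx'] := max_twice x tx (fun y => x_max y isT).
by exists x, x'; split=> [|//|k]; [rewrite eq_sym | exact: x_max].
Qed.

Lemma T0_null_pos m (t : 'I_m -> R) x : T0_null t -> 0 < t x ->
  exists k1 k2, [/\ k1 != k2, t k1 = t k2 & t x <= t k1].
Proof.
case=> [t0|[k1 [k2 [k12 t12 t_max]]]] tx; first by rewrite t0 ltxx in tx.
by exists k1, k2.
Qed.

End TropicalNullity.

Section LogTransform.
Variables (R : realType) (n r : nat) (rho : vec n -> R).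
Hypothesis rho_ge0 : forall a, in_Delta r a -> 0 <= rho a.
Local Notation f := (f_of r rho).

Lemma f_of_fin a : in_Delta r a -> rho a != 0 -> f a = (- ln (rho a))%:E.
Proof. by rewrite /f_of => -> /negbTE ->. Qed.

Lemma f_of_finP a : f a != +oo%E <-> in_Delta r a /\ rho a != 0.
Proof.
split=> [|[da na]]; last by rewrite f_of_fin.
by rewrite /f_of; case: ifP => // da; case: ifP => // /negbT.
Qed.

Lemma f_of_neq_ninfty a : f a != -oo%E.
Proof. by rewrite /f_of; case: ifP => //; case: ifP. Qed.

Lemma rho_gt0 a : in_Delta r a -> rho a != 0 -> 0 < rho a.
Proof. by move=> da na; rewrite lt0r na rho_ge0. Qed.

Lemma f_ofD_le a b a' b' :
  in_Delta r a -> in_Delta r b -> in_Delta r a' -> in_Delta r b' ->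
  rho a != 0 -> rho b != 0 -> rho a' != 0 -> rho b' != 0 ->
  (f a' + f b' <= f a + f b)%E <-> rho a * rho b <= rho a' * rho b'.
Proof.
move=> da db da' db' na nb na' nb'.
rewrite !f_of_fin // -!EFinD lee_fin -!opprD lerN2 -!lnM ?posrE ?rho_gt0 //.
by rewrite ler_ln ?posrE ?mulr_gt0 ?rho_gt0.
Qed.

End LogTransform.

Definition mul_exchange (R : realType) n r (rho : vec n -> R) : Prop :=
  forall a b, in_Delta r a -> in_Delta r b -> rho a != 0 -> rho b != 0 ->
  forall k, b k < a k -> exists l, a l < b l /\
    rho a * rho b <= rho (a - eps k + eps l) * rho (b + eps k - eps l).

Lemma Mconvex_f_ofP (R : realType) n r (rho : vec n -> R) :
  (forall a, in_Delta r a -> 0 <= rho a) ->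
  Mconvex_fun (f_of r rho) <->
  (exists a, in_Delta r a /\ rho a != 0) /\ mul_exchange r rho.
Proof.
move=> rho_ge0.
split=> [[[a0 fa0] f_ex]|[[a0 supp_a0] rho_ex]]; split; first by exists a0; apply/f_of_finP.
- move=> a b da db na nb k bk.
  have [fa fb] : f_of r rho a != +oo%E /\ f_of r rho b != +oo%E.
    by split; apply/f_of_finP.
  have [l [alb]] := f_ex a b fa fb k bk.
  set a' := a - eps k + eps l; set b' := b + eps k - eps l => le_f.
  have [/f_of_finP[da' na'] /f_of_finP[db' nb']] : f_of r rho a' != +oo%E /\ f_of r rho b' != +oo%E.
    move: le_f (f_of_neq_ninfty r rho a') (f_of_neq_ninfty r rho b').
    rewrite (f_of_fin da na) (f_of_fin db nb) -EFinD.
    by case: (f_of r rho a') => [?| |]; case: (f_of r rho b') => [?| |].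
  by exists l; split; last apply/(f_ofD_le rho_ge0 da db da' db' na nb na' nb').
- by exists a0; apply/f_of_finP.
- move=> a b /f_of_finP[da na] /f_of_finP[db nb] k bk.
  have [l [alb le_rho]] := rho_ex a b da db na nb k bk.
  exists l; split => //.
  have [/in_DeltaP[a_ge0 _] /in_DeltaP[b_ge0 _]] := (da, db).
  have da' := in_Delta_exchange l da (le_lt_trans (b_ge0 k) bk).
  have db' : in_Delta r (b + eps k - eps l).
    by rewrite addrAC; apply: in_Delta_exchange db (le_lt_trans (a_ge0 l) alb).
  have : rho (a - eps k + eps l) * rho (b + eps k - eps l) != 0.
    by rewrite lt0r_neq0 // (lt_le_trans _ le_rho) // mulr_gt0 ?(rho_gt0 rho_ge0).
  rewrite mulf_eq0 negb_or => /andP[na' nb'].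
  exact/(f_ofD_le rho_ge0 da db da' db' na nb na' nb').
Qed.

Lemma T0_null_of_mul_exchange (R : realType) n r (rho : vec n -> R) :
  (forall a, in_Delta r a -> 0 <= rho a) -> mul_exchange r rho ->
  forall s, (0 < s <= r)%N -> forall a, in_Delta (r - s) a ->
  forall (i : 'I_s.+1 -> 'I_n) (j : 'I_s.-1 -> 'I_n),
  T0_null (fun x => rho (a - eps (i x) + \sum_k eps (i k)) *
                    rho (a + eps (i x) + \sum_l eps (j l))).
Proof.
move=> rho_ge0 rho_ex s s_bnd a da i j.
set SI := \sum_k eps (i k); set SJ := \sum_l eps (j l).
have SJ_ge0 c : 0 <= SJ c := sum_eps_ge0 j c.
have terms_in_Delta x p := @T0_terms_in_Delta n r s a i j x p s_bnd da.
apply: T0_null_max_twice => [x|x tx x_max].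
  by have [dI dJ] := terms_in_Delta x (i x); rewrite mulr_ge0 ?rho_ge0.
have [[x' x'x ix'x]|i_x_once] := pselect (exists2 x', x' != x & i x' = i x).
  by exists x'; rewrite // ix'x.
set k := i x; set al := a + eps k + SJ; set be := a - eps k + SI.
have SI_k : SI k = 1.
  by apply: sum_eps_eq1 => y yx; apply/eqP => iyx; apply: i_x_once; exists y.
have [dbe dal] := terms_in_Delta x k.
have [nbe nal] : rho be != 0 /\ rho al != 0.
  by apply/andP; rewrite -negb_or -mulf_eq0 lt0r_neq0.
have be_al_k : be k < al k.
  by rewrite !ffunE eqxx SI_k mulr1n subrK ltr_wpDr // ltrDl.
have [l [al_be_l le_rho]] := rho_ex al be dal dbe nal nbe k be_al_k.
have lk : l != k by apply: contraTneq al_be_l => ->; rewrite -leNgt ltW.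
have [x' ix'] : exists x', i x' = l.
  apply: sum_eps_gt0; apply: le_lt_trans (SJ_ge0 l) _.
  by move: al_be_l; rewrite !ffunE eq_sym (negbTE lk) mulr0n oppr0 !addr0 ltrD2l.
exists x'; first by apply: contra_neq lk => x'x; rewrite -ix' x'x.
apply/le_anti; rewrite x_max /= ix' mulrC.
have -> : a - eps l + SI = be + eps k - eps l.
  by apply/ffunP => c; rewrite !ffunE; lia.
have -> : a + eps l + SJ = al - eps k + eps l.
  by apply/ffunP => c; rewrite !ffunE; lia.
by rewrite [X in _ <= X]mulrC.
Qed.

Section ExchangeFromT0.
Variables (R : realType) (n r : nat) (J : set (vec n)) (rho : vec n -> R).
Hypothesis J_Delta : forall a, J a -> in_Delta r a.
Hypothesis supp_rho : forall a, in_Delta r a -> (rho a != 0 <-> J a).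
Hypothesis rho_T0 : T0_representation r J rho.

Variables (a b : vec n) (k : 'I_n).
Hypotheses (Ja : J a) (Jb : J b) (bk : b k < a k).

Local Notation m := (vmin a b).

Let m_le_a c : m c <= a c. Proof. by rewrite ffunE ge_min lexx. Qed.
Let m_le_b c : m c <= b c. Proof. by rewrite ffunE ge_min lexx orbT. Qed.
Let m_k : m k = b k. Proof. by rewrite ffunE min_r // ltW. Qed.
Let a_ge0 : forall c, 0 <= a c. Proof. by have /in_DeltaP[] := J_Delta Ja. Qed.
Let b_ge0 : forall c, 0 <= b c. Proof. by have /in_DeltaP[] := J_Delta Jb. Qed.

Let vsum_sub_min : vsum (a - m) = vsum (b - m).
Proof.
have /in_DeltaP[_ sa] := J_Delta Ja; have /in_DeltaP[_ sb] := J_Delta Jb.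
by rewrite !vsumB sa sb.
Qed.

Let rho_J_gt0 v : J v -> 0 < rho v.
Proof.
have [rho_ge0 _] := rho_T0.
by move=> Jv; have dv := J_Delta Jv; rewrite lt0r rho_ge0 // andbT; apply/supp_rho.
Qed.

Let sub_min_ge0 (v : vec n) c : m c <= v c -> 0 <= (v - m) c.
Proof. by move=> mv; rewrite 2!ffunE subr_ge0. Qed.

Lemma exchange_adjacent : vsum (b - m) = 1 ->
  exists l, a l < b l /\ a - eps k + eps l = b /\ b + eps k - eps l = a.
Proof.
move=> sbm; have sam := etrans vsum_sub_min sbm.
have [l bmE] := vsum_eq1_eps (fun c => sub_min_ge0 (m_le_b c)) sbm.
have [k' amE] := vsum_eq1_eps (fun c => sub_min_ge0 (m_le_a c)) sam.
have k'k : k' = k.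
  apply/eqP; have := congr1 (fun v : vec n => v k) amE.
  by rewrite 2!ffunE m_k epsE; case: eqP => //= _ /eqP; rewrite subr_eq0 gt_eqF.
have lk : l != k.
  apply/eqP => lk; have := congr1 (fun v : vec n => v k) bmE.
  by rewrite 2!ffunE m_k epsE subrr lk eqxx.
have am : a - eps k = m by rewrite -k'k -amE opprB addrC subrK.
have bm : b - eps l = m by rewrite -bmE opprB addrC subrK.
exists l; split; last by split; [rewrite am -bm subrK | rewrite addrAC bm -am subrK].
have := congr1 (fun v : vec n => v l) (etrans am (esym bm)).
by rewrite !ffunE eqxx eq_sym (negbTE lk) mulr0n mulr1n subr0 => ->; rewrite ltrBlDr ltrDl.
Qed.

Lemma T0_null_at_min s (i : 'I_s.+3 -> 'I_n) (j : 'I_s.+1 -> 'I_n) :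
  vsum (b - m) = s.+2 ->
  \sum_x eps (i x) = b + eps k - m -> \sum_x eps (j x) = a - eps k - m ->
  T0_null (fun x => rho (b + eps k - eps (i x)) * rho (a - eps k + eps (i x))).
Proof.
move=> sbm iE jE; have [_ [_ T0]] := rho_T0.
have /in_DeltaP[_ sb] := J_Delta Jb.
have m_ge0 c : 0 <= m c by rewrite ffunE le_min a_ge0 b_ge0.
have s_bnd : (1 < s.+2 <= r)%N.
  have vsum_m_ge0 : 0 <= vsum m by apply: sumr_ge0.
  by move: sbm; rewrite vsumB sb; lia.
have dm : in_Delta (r - s.+2) m.
  by apply/in_DeltaP; split=> //; move: sbm; rewrite vsumB sb; lia.
have dmin : vle (delta_minus J) m.
  by move=> c; rewrite [m c]ffunE le_min !(delta_minus_le J_Delta).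
have dplus : vle (m + \sum_x eps (i x) + \sum_x eps (j x)) (delta_plus J).
  move=> c; rewrite iE jE; have := delta_plus_ge J_Delta c Ja.
  have := delta_plus_ge J_Delta c Jb; rewrite !ffunE.
  by case: (leP (a c) (b c)) => _; case: eqP => _ /=; lia.
suff -> : (fun x => rho (b + eps k - eps (i x)) * rho (a - eps k + eps (i x))) =
    (fun x => rho (m - eps (i x) + \sum_y eps (i y)) * rho (m + eps (i x) + \sum_y eps (j y))).
  exact (T0 s.+2 s_bnd m dm dmin i j dplus).
apply/funext => x; rewrite iE jE.
by congr (rho _ * rho _); apply/ffunP => c; rewrite !ffunE; lia.
Qed.

Lemma exchange_far s : vsum (b - m) = s.+2 ->
  exists l, a l < b l /\
    rho a * rho b <= rho (a - eps k + eps l) * rho (b + eps k - eps l).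
Proof.
move=> sbm; have sam := etrans vsum_sub_min sbm.
have [i iE] : exists i : 'I_s.+3 -> 'I_n, \sum_x eps (i x) = b + eps k - m.
  apply: sum_eps_of_ge0 => [c|]; last by rewrite addrAC vsumD sbm vsum_eps; lia.
  by rewrite addrAC ffunE addr_ge0 ?sub_min_ge0 ?epsE.
have [j jE] : exists j : 'I_s.+1 -> 'I_n, \sum_x eps (j x) = a - eps k - m.
  apply: sum_eps_of_ge0 => [c|]; last by rewrite addrAC vsumB sam vsum_eps; lia.
  by have := m_le_a c; have := m_k; rewrite !ffunE; case: eqP => [<-|_] /=; lia.
have k_once : (b + eps k - m) k = 1.
  by move: m_k; rewrite !ffunE eqxx mulr1n => ->; rewrite addrAC subrr add0r.
have [x0 ix0] : exists x0, i x0 = k by apply: sum_eps_gt0; rewrite iE k_once.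
have t_x0 : 0 < rho (b + eps k - eps (i x0)) * rho (a - eps k + eps (i x0)).
  by rewrite ix0 addrK subrK mulr_gt0 ?rho_J_gt0.
have [k1 [k2 [k12 t12 t_ge]]] := T0_null_pos (T0_null_at_min sbm iE jE) t_x0.
have [x [ixk tx]] : exists x, i x != k /\
    rho (b + eps k - eps (i x)) * rho (a - eps k + eps (i x)) =
    rho (b + eps k - eps (i k1)) * rho (a - eps k + eps (i k1)).
  have [ik1|] := eqVneq (i k1) k; last by exists k1.
  have [ik2|] := eqVneq (i k2) k; last by exists k2.
  by have := sum_eps_ge2 k12 (etrans ik1 (esym ik2)); rewrite iE ik1 k_once.
move: t_ge; rewrite -tx ix0 addrK subrK mulrC [X in _ <= X]mulrC.
exists (i x); split => //.
have := sum_eps_ge1 i x; rewrite iE !ffunE eq_sym (negbTE ixk) mulr0n addr0.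
by rewrite -gtz0_ge1 subr_gt0 gt_min ltxx orbF.
Qed.

Lemma exchange_of_T0 : exists l, a l < b l /\
  rho a * rho b <= rho (a - eps k + eps l) * rho (b + eps k - eps l).
Proof.
have [s sbm] : exists s, vsum (b - m) = s.+1%:Z.
  have : 0 < vsum (b - m).
    rewrite -vsum_sub_min (lt_le_trans _ (vsum_ge_coord k (fun c => sub_min_ge0 (m_le_a c)))) //.
    by rewrite 2!ffunE m_k subr_gt0.
  by exists `|vsum (b - m)|.-1; lia.
case: s sbm => [|s] sbm.
  have [l [alb [a'E b'E]]] := exchange_adjacent sbm.
  by exists l; rewrite a'E b'E mulrC.
exact: exchange_far sbm.
Qed.

End ExchangeFromT0.

Lemma mul_exchange_of_T0 (R : realType) n r (J : set (vec n)) (rho : vec n -> R) :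
  (forall a, J a -> in_Delta r a) ->
  (forall a, in_Delta r a -> (rho a != 0 <-> J a)) ->
  T0_representation r J rho -> mul_exchange r rho.
Proof.
move=> J_Delta supp_rho rho_T0 a b da db na nb k bk.
have [Ja Jb] := (proj1 (supp_rho a da) na, proj1 (supp_rho b db) nb).
exact: (exchange_of_T0 J_Delta supp_rho rho_T0 Ja Jb bk).
Qed.

Theorem propositionB (R : realType) (n r : nat) (J : set (vec n))
    (rho : vec n -> R) :
  (forall a, J a -> in_Delta r a) ->
  Mconvex_set J ->
  (forall a, in_Delta r a -> 0 <= rho a) ->
  (forall a, in_Delta r a -> (rho a != 0 <-> J a)) ->
  (T0_representation r J rho <-> Mconvex_fun (f_of r rho)).
Proof.
(* The support of an M-convex function is M-convex, so only [J !=set0] is needed. *)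
move=> J_Delta [[a Ja] _] rho_ge0 supp_rho; rewrite Mconvex_f_ofP //.
split=> [rho_T0|[_ rho_ex]].
  split; last exact: mul_exchange_of_T0 J_Delta supp_rho rho_T0.
  by exists a; have da := J_Delta a Ja; split=> //; apply/supp_rho.
split=> //; split=> // s /andP[s2 sr] b db _ i j _.
have s_bnd : (0 < s <= r)%N by rewrite sr andbT (ltn_trans _ s2).
exact (T0_null_of_mul_exchange rho_ge0 rho_ex s_bnd db i j).
Qed.
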